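(* Let $K$ be a field, $R=\bigoplus_{m\ge0}R_m$ an $\mathbb N$-graded $K$-algebra, and let $A=\sigma(R)\langle x_1,x_2\rangle$ be a connected graded skew PBW extension of $R$. Then $A$ is a connected graded double Ore extension of $R$ (with generating variables $x_1,x_2$).
   Context: All algebras are over a field $K$; a graded algebra $B=\bigoplus_{p\ge0}B_p$ is connected if $B_0=K$. Skew PBW extension: a ring $A$ is a skew PBW extension of $R$ in $x_1,\dots,x_n$, written $A=\sigma(R)\langle x_1,\dots,x_n\rangle$, if (i) $R\subseteq A$; (ii) $A$ is a free left $R$-module with basis the standard monomials $x^\alpha=x_1^{\alpha_1}\cdots x_n^{\alpha_n}$, $\alpha\in\mathbb N^n$; (iii) for each $i$ and $r\in R\setminus\{0\}$ there is $c_{i,r}\in R\setminus\{0\}$ with $x_ir-c_{i,r}x_i\in R$; (iv) for all $i,j$ there is $c_{i,j}\in R\setminus\{0\}$ with $x_jx_i-c_{i,j}x_ix_j\in R+Rx_1+\cdots+Rx_n$. Then for each $i$ there are an injective ring endomorphism $\sigma_i$ of $R$ and a $\sigma_i$-derivation $\delta_i$ with $x_ir=\sigma_i(r)x_i+\delta_i(r)$. $A$ is bijective if every $\sigma_i$ is bijective and every $c_{i,j}$ ($i<j$) is invertible. A graded skew PBW extension is a bijective skew PBW extension of an $\mathbb N$-graded algebra $R$ such that each $\sigma_i$ is a graded homomorphism, each $\delta_i$ satisfies $\delta_i(R_m)\subseteq R_{m+1}$, and $x_jx_i-c_{i,j}x_ix_j\in R_2+R_1x_1+\cdots+R_1x_n$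 with $c_{i,j}\in R_0$; it is graded by $A_p=\mathrm{span}_K\{r_tx^\alpha: t+|\alpha|=p,\ r_t\in R_t\}$. Double Ore extensions: a $K$-algebra $B\supseteq R$ is a right double Ore extension of $R$ if (1) $B$ is generated by $R$ and $x_1,x_2$; (2) $x_2x_1=p_{12}x_1x_2+p_{11}x_1^2+\tau_1x_1+\tau_2x_2+\tau_0$ with $p_{12},p_{11}\in K$, $\tau_i\in R$; (3) $B$ is a free left $R$-module with basis $\{x_1^ax_2^b\}_{a,b\ge0}$; (4) $x_1R+x_2R\subseteq Rx_1+Rx_2+R$. It is a left double Ore extension if (1) holds, $x_1x_2=p'_{12}x_2x_1+p'_{11}x_1^2+x_1\tau'_1+x_2\tau'_2+\tau'_0$ with $p'_{12},p'_{11}\in K$, $\tau'_i\in R$, $B$ is a free right $R$-module with basis $\{x_1^ax_2^b\}$, and $x_1R+x_2R\subseteq Rx_1+Rx_2+R$. It is a double Ore extension if it is both a left and a right double Ore extension with the same generators $x_1,x_2$. It is graded if all its relations are homogeneous with $\deg x_1=\deg x_2=1$ (with $R$ graded). *)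

From HB Require Import structures.
From mathcomp Require Import all_boot all_order all_algebra.
Set Implicit Arguments. Unset Strict Implicit. Unset Printing Implicit Defensive.
Import GRing.Theory.
Local Open Scope ring_scope.

Section Defs.
Variables (K : fieldType) (A : algType K).

Definition subalg (S : A -> Prop) : Prop :=
  [/\ S 1,
      (forall (k : K) u v, S u -> S v -> S (k *: u + v)) &
      (forall u v, S u -> S v -> S (u * v))].

(* S = \bigoplus_{p >= 0} G p as an N-graded K-algebra (G p are K-subspaces
   of S, G p * G q <= G (p+q), and the sum of the G p is direct and equals S). *)
Definition graded_by (S : A -> Prop) (G : nat -> A -> Prop) : Prop :=
  (forall m a, G m a -> S a) /\
  (forall m, G m 0) /\
  (forall m (k : K) u v, G m u -> G m v -> G m (k *: u + v)) /\
  (forall p q u v, G p u -> G q v -> G (p + q)%N (u * v)) /\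
      (forall s, S s -> exists (N : nat) (f : nat -> A),
          (forall p, G p (f p)) /\ s = \sum_(p < N) f p) /\
      (forall (N : nat) (f : nat -> A), (forall p, G p (f p)) ->
          \sum_(p < N) f p = 0 -> forall p, (p < N)%N -> f p = 0).

Definition mono (x1 x2 : A) (a b : nat) : A := x1 ^+ a * x2 ^+ b.

Definition left_basis (R : A -> Prop) (x1 x2 : A) : Prop :=
  (forall s : A, exists (N : nat) (r : nat -> nat -> A),
      (forall i j, R (r i j)) /\
      s = \sum_(i < N) \sum_(j < N) r i j * mono x1 x2 i j) /\
  (forall (N : nat) (r : nat -> nat -> A), (forall i j, R (r i j)) ->
      \sum_(i < N) \sum_(j < N) r i j * mono x1 x2 i j = 0 ->
      forall i j, (i < N)%N -> (j < N)%N -> r i j = 0).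

Definition right_basis (R : A -> Prop) (x1 x2 : A) : Prop :=
  (forall s : A, exists (N : nat) (r : nat -> nat -> A),
      (forall i j, R (r i j)) /\
      s = \sum_(i < N) \sum_(j < N) mono x1 x2 i j * r i j) /\
  (forall (N : nat) (r : nat -> nat -> A), (forall i j, R (r i j)) ->
      \sum_(i < N) \sum_(j < N) mono x1 x2 i j * r i j = 0 ->
      forall i j, (i < N)%N -> (j < N)%N -> r i j = 0).

Definition xv (x1 x2 : A) (i : 'I_2) : A := if val i == 0%N then x1 else x2.

(* The degree-p piece of a skew PBW extension in x1, x2:
   A_p = span_K { r_t x^alpha : t + |alpha| = p, r_t \in R_t }.  Since each
   R_t is a K-subspace this span is the set of sums below. *)
Definition pbw_piece (GR : nat -> A -> Prop) (x1 x2 : A) (p : nat) (a : A) : Prop :=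
  exists r : nat -> nat -> A,
    (forall i j, (i + j <= p)%N -> GR (p - (i + j))%N (r i j)) /\
    a = \sum_(i < p.+1) \sum_(j < p.+1 | (i + j <= p)%N) r i j * mono x1 x2 i j.

Definition in_R2R1x (GR : nat -> A -> Prop) (x1 x2 : A) (a : A) : Prop :=
  exists t0 t1 t2, [/\ GR 2%N t0, GR 1%N t1, GR 1%N t2 & a = t0 + t1 * x1 + t2 * x2].

Definition connected_graded_skew_PBW2 (R : A -> Prop) (GR : nat -> A -> Prop)
    (x1 x2 : A) : Prop :=
  [/\
      subalg R /\ graded_by R GR,
      left_basis R x1 x2,
      (forall (i : 'I_2) r, R r -> r <> 0 ->
          exists c, [/\ R c, c <> 0 & R (xv x1 x2 i * r - c * xv x1 x2 i)]) /\
      (* (iv), with c_{i,j} \in R_0, invertible for i < j (bijectivity),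
         and x_j x_i - c_{i,j} x_i x_j \in R_2 + R_1 x_1 + R_1 x_2 (graded) *)
      (forall i j : 'I_2, exists c, [/\ GR 0%N c, c <> 0,
          ((i < j)%N -> exists d, [/\ R d, c * d = 1 & d * c = 1]) &
          in_R2R1x GR x1 x2 (xv x1 x2 j * xv x1 x2 i - c * xv x1 x2 i * xv x1 x2 j)]),
      (exists (sigma delta : 'I_2 -> A -> A),
          [/\ (forall i r, R r -> [/\ R (sigma i r), R (delta i r) &
                  xv x1 x2 i * r = sigma i r * xv x1 x2 i + delta i r]),
              (forall i r s, R r -> R s -> sigma i r = sigma i s -> r = s),
              (forall i s, R s -> exists r, R r /\ sigma i r = s) &
              (forall i m r, GR m r -> GR m (sigma i r) /\ GR m.+1 (delta i r))]) &
      graded_by (fun _ => True) (pbw_piece GR x1 x2) /\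
      (forall a, pbw_piece GR x1 x2 0 a <-> exists k : K, a = k%:A)].

Definition connected_graded_double_Ore (R : A -> Prop) (GR : nat -> A -> Prop)
    (x1 x2 : A) : Prop :=
  [/\
      [/\ graded_by (fun _ => True) (pbw_piece GR x1 x2),
          (forall a, pbw_piece GR x1 x2 0 a <-> exists k : K, a = k%:A),
          pbw_piece GR x1 x2 1 x1, pbw_piece GR x1 x2 1 x2 &
          (forall m r, GR m r -> pbw_piece GR x1 x2 m r)],
      (forall S, subalg S -> (forall r, R r -> S r) -> S x1 -> S x2 -> forall a, S a),
      [/\ (exists (p12 p11 : K) t0 t1 t2, [/\ GR 2%N t0, GR 1%N t1, GR 1%N t2 &
             x2 * x1 = p12 *: (x1 * x2) + p11 *: (x1 ^+ 2) + t1 * x1 + t2 * x2 + t0]),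
          left_basis R x1 x2 &
          (forall r s, R r -> R s -> exists a b c,
             [/\ R a, R b, R c & x1 * r + x2 * s = a * x1 + b * x2 + c])],
      [/\ (exists (p12 p11 : K) t0 t1 t2, [/\ GR 2%N t0, GR 1%N t1, GR 1%N t2 &
             x1 * x2 = p12 *: (x2 * x1) + p11 *: (x1 ^+ 2) + x1 * t1 + x2 * t2 + t0]),
          right_basis R x1 x2 &
          (forall r s, R r -> R s -> exists a b c,
             [/\ R a, R b, R c & x1 * r + x2 * s = a * x1 + b * x2 + c])] &
      (forall (i : 'I_2) m r, GR m r -> exists a b c,
          [/\ GR m a, GR m b, GR m.+1 c & xv x1 x2 i * r = a * x1 + b * x2 + c])].

End Defs.

(* The left PBW basis {r x1^a x2^b} gives coordinate functions, and because
   x_i r = sigma_i(r) x_i + delta_i(r) with sigma_i injective, these show that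
   sigma_i is additive and that x1^a x2^b r equals
   sigma_1^a sigma_2^b(r) x1^a x2^b modulo monomials of lower total degree.
   This triangularity makes the monomials a free basis on the right as well;
   they span on the right because every sigma_i is onto, so r x_i can be
   rewritten as x_i r' - delta_i(r'), and x2^j x1 is moved into right normal
   form with the commutation relation.  Solving the graded relation
   x2 x1 = c x1 x2 + t1 x1 + t2 x2 + t0 (c a nonzero scalar because A is
   connected) for x1 x2, after replacing t_i x_i by x_i u - delta_i(u), gives
   the left double Ore relation; its coefficients u are homogeneous since an
   injective graded map reflects the grading. *)
From Pilot Require Import Defs.
From HB Require Import structures.
From mathcomp Require Import all_boot all_order all_algebra zify.
From Stdlib Require Import ClassicalEpsilon.
Set Implicit Arguments. Unset Strict Implicit. Unset Printing Implicit Defensive.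
Import GRing.Theory.
Local Open Scope ring_scope.

Section FiniteSums.
Variable V : zmodType.

Inductive sums (P : V -> Prop) : V -> Prop :=
  | sums0 : sums P 0
  | sums_cons x s : P x -> sums P s -> sums P (x + s).

Lemma sums1 (P : V -> Prop) x : P x -> sums P x.
Proof. by move=> Px; rewrite -[x]addr0; apply: sums_cons => //; apply: sums0. Qed.

Lemma sumsD (P : V -> Prop) s t : sums P s -> sums P t -> sums P (s + t).
Proof.
elim=> [|x s' Px _ IH] St; first by rewrite add0r.
by rewrite -addrA; apply: sums_cons => //; apply: IH.
Qed.

Lemma sums_morph (P Q : V -> Prop) (f : V -> V) :
  f 0 = 0 -> {morph f : x y / x + y} -> (forall x, P x -> sums Q (f x)) ->
  forall s, sums P s -> sums Q (f s).
Proof.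
move=> f0 fD fPQ s; elim=> [|x t Px _ IH]; first by rewrite f0; apply: sums0.
by rewrite fD; apply: sumsD => //; apply: fPQ.
Qed.

Lemma sums_sub (P Q : V -> Prop) s : (forall x, P x -> Q x) -> sums P s -> sums Q s.
Proof. by move=> PQ; apply: (@sums_morph P Q id) => // x /PQ /sums1. Qed.

Lemma sumsN (P : V -> Prop) s : (forall x, P x -> P (- x)) -> sums P s -> sums P (- s).
Proof.
move=> PN; apply: sums_morph => [|x y|x Px]; [exact: oppr0 | exact: opprD |].
exact/sums1/PN.
Qed.

Lemma sums_big (P : V -> Prop) (I : Type) (l : seq I) (Pi : pred I) (F : I -> V) :
  (forall i, Pi i -> sums P (F i)) -> sums P (\sum_(i <- l | Pi i) F i).
Proof. by move=> PF; apply: (big_ind (sums P)) => //; [exact: sums0 | exact: sumsD]. Qed.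

Definition dsum N (F : nat -> nat -> V) := \sum_(i < N) \sum_(j < N) F i j.

Definition supported N (F : nat -> nat -> V) :=
  forall i j, (N <= i)%N || (N <= j)%N -> F i j = 0.

Definition single (a b : nat) (v : V) (i j : nat) := if (i == a) && (j == b) then v else 0.

Lemma supported_widen N M F : supported N F -> (N <= M)%N -> supported M F.
Proof.
move=> FN NM i j Mij; apply: FN.
by case/orP: Mij => [Mi|Mj]; rewrite ?(leq_trans NM Mi) ?(leq_trans NM Mj) ?orbT.
Qed.

Lemma supported_single N a b v : (a < N)%N -> (b < N)%N -> supported N (single a b v).
Proof.
move=> aN bN i j Nij; rewrite /single; case: ifP => // /andP [/eqP ia /eqP jb].
by move: Nij; rewrite ia jb leqNgt aN leqNgt bN.
Qed.

Lemma eq_dsum N F G : (forall i j, F i j = G i j) -> dsum N F = dsum N G.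
Proof. by move=> FG; apply: eq_bigr => i _; apply: eq_bigr => j _. Qed.

Lemma dsumD N F G : dsum N (fun i j => F i j + G i j) = dsum N F + dsum N G.
Proof. by rewrite /dsum -big_split; apply: eq_bigr => i _; rewrite -big_split. Qed.

Lemma dsumB N F G : dsum N (fun i j => F i j - G i j) = dsum N F - dsum N G.
Proof. by rewrite /dsum -sumrB; apply: eq_bigr => i _; rewrite -sumrB. Qed.

Lemma dsum_widen N M F : supported N F -> (N <= M)%N -> dsum M F = dsum N F.
Proof.
move=> FN NM; rewrite /dsum [RHS](big_ord_widen M (fun i => \sum_(j < N) F i j) NM).
rewrite [RHS]big_mkcond; apply: eq_bigr => i _; case: ifP => [iN|/negbT]; last first.
  by rewrite -leqNgt => Ni; rewrite big1 // => j _; rewrite FN ?Ni.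
rewrite [RHS](big_ord_widen M (F i) NM) [RHS]big_mkcond; apply: eq_bigr => j _.
by case: ifP => // /negbT; rewrite -leqNgt => Nj; rewrite FN ?Nj ?orbT.
Qed.

Lemma dsum1 N F a b : (a < N)%N -> (b < N)%N ->
  (forall i j, (i != a) || (j != b) -> F i j = 0) -> dsum N F = F a b.
Proof.
move=> aN bN Fab; rewrite /dsum (bigD1 (Ordinal aN)) //= (bigD1 (Ordinal bN)) //=.
rewrite [X in _ + X + _]big1 => [|j]; last by rewrite -val_eqE => jb; rewrite Fab ?jb ?orbT.
rewrite [X in _ + X]big1 ?addr0 // => i; rewrite -val_eqE => ia.
by rewrite big1 // => j _; rewrite Fab ?ia.
Qed.

End FiniteSums.

Section SubalgebraClosure.
Variables (K : fieldType) (A : algType K) (S : A -> Prop).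
Hypothesis HS : subalg S.

Lemma subalg1 : S 1. Proof. by case: HS. Qed.

Lemma subalg0 : S 0.
Proof. by case: HS => S1 SZD _; have := SZD (-1) 1 1 S1 S1; rewrite scaleN1r addNr. Qed.

Lemma subalgZ k u : S u -> S (k *: u).
Proof. by case: HS => _ SZD _ Su; have := SZD k u 0 Su subalg0; rewrite addr0. Qed.

Lemma subalgD u v : S u -> S v -> S (u + v).
Proof. by case: HS => _ SZD _ Su Sv; have := SZD 1 u v Su Sv; rewrite scale1r. Qed.

Lemma subalgN u : S u -> S (- u).
Proof. by move=> Su; rewrite -scaleN1r; apply: subalgZ. Qed.

Lemma subalgB u v : S u -> S v -> S (u - v).
Proof. by move=> Su Sv; apply/subalgD/subalgN. Qed.

Lemma subalgM u v : S u -> S v -> S (u * v).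
Proof. by case: HS => _ _; apply. Qed.

Lemma subalgX u n : S u -> S (u ^+ n).
Proof.
by move=> Su; elim: n => [|n IH]; rewrite ?expr0 ?exprS; [exact: subalg1 | apply: subalgM].
Qed.

Lemma subalg_sum (I : Type) (r : seq I) (P : pred I) (F : I -> A) :
  (forall i, P i -> S (F i)) -> S (\sum_(i <- r | P i) F i).
Proof. by move=> SF; apply: (big_ind S) => //; [exact: subalg0 | exact: subalgD]. Qed.

End SubalgebraClosure.

Section GradedClosure.
Variables (K : fieldType) (A : algType K) (S : A -> Prop) (G : nat -> A -> Prop).
Hypothesis HG : graded_by S G.

Lemma graded_sub m u : G m u -> S u. Proof. by case: HG => GS _; apply: GS. Qed.

Lemma graded0 m : G m 0. Proof. by case: HG => _ []. Qed.

Lemma gradedZ m k u : G m u -> G m (k *: u).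
Proof.
by case: HG => _ [_ [GZD _]] Gu; have := GZD m k u 0 Gu (graded0 m); rewrite addr0.
Qed.

Lemma gradedD m u v : G m u -> G m v -> G m (u + v).
Proof. by case: HG => _ [_ [GZD _]] Gu Gv; have := GZD m 1 u v Gu Gv; rewrite scale1r. Qed.

Lemma gradedB m u v : G m u -> G m v -> G m (u - v).
Proof. by move=> Gu Gv; apply: gradedD => //; rewrite -scaleN1r; apply: gradedZ. Qed.

Lemma graded_sum m (I : Type) (r : seq I) (P : pred I) (F : I -> A) :
  (forall i, P i -> G m (F i)) -> G m (\sum_(i <- r | P i) F i).
Proof. by move=> GF; apply: (big_ind (G m)) => //; [exact: graded0 | exact: gradedD]. Qed.

End GradedClosure.
Section GradedReflection.
Variables (K : fieldType) (A : algType K) (S : A -> Prop) (G : nat -> A -> Prop)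
  (f : A -> A).
Hypotheses (HS : subalg S) (HG : graded_by S G)
  (fD : forall u v, S u -> S v -> f (u + v) = f u + f v)
  (f_eq0 : forall u, S u -> f u = 0 -> u = 0)
  (fG : forall m u, G m u -> G m (f u)).

Lemma graded_reflect m u : S u -> G m (f u) -> G m u.
Proof.
case: HG => _ [_ [_ [_ [decompose decompose_uniq]]]] Su.
have [N [g [Gg ->]]] := decompose u Su; set M := maxn N m.+1.
pose g' p := if (p < N)%N then g p else 0.
have Gg' p : G p (g' p).
  rewrite /g'; case: ifP => _; [exact: Gg | exact: (graded0 HG p)].
have Sg' p : S (g' p) := graded_sub HG (Gg' p).
have -> : \sum_(p < N) g p = \sum_(p < M) g' p.
  by rewrite (big_ord_widen M g (leq_maxl N m.+1)) big_mkcond.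
have S0 := subalg0 HS.
have f0 : f 0 = 0 by apply: (addIr (f 0)); rewrite add0r -fD ?addr0.
have f_sum n : f (\sum_(p < n) g' p) = \sum_(p < n) f (g' p).
  elim: n => [|n IH]; first by rewrite !big_ord0.
  by rewrite !big_ord_recr /= fD ?IH //; apply: subalg_sum.
pose h p := f (g' p) - (if p == m then f (\sum_(p < M) g' p) else 0).
have mM : (m < M)%N by rewrite leq_maxr.
have h_sum : \sum_(p < M) h p = 0.
  rewrite sumrB -big_mkcond /= (big_ord1_eq _ (fun _ => f (\sum_(p < M) g' p))) mM.
  by rewrite f_sum subrr.
move=> Gfu; have Gh p : G p (h p).
  apply: (gradedB HG); first exact: fG.
  by case: eqP => [->|_] //; exact: (graded0 HG p).
apply: (graded_sum HG) => p _; case: (eqVneq (p : nat) m) => [-> //|pm].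
suff -> : g' p = 0 by exact: (graded0 HG m).
apply: f_eq0 => //; have := decompose_uniq M h Gh h_sum p (ltn_ord p).
by rewrite /h (negPf pm) subr0.
Qed.

End GradedReflection.

Section Expansions.
Variables (K : fieldType) (A : algType K) (R : A -> Prop) (x1 x2 : A).
Local Notation mono := (mono x1 x2).

Definition lexp N (f : nat -> nat -> A) := dsum N (fun i j => f i j * mono i j).
Definition rexp N (f : nat -> nat -> A) := dsum N (fun i j => mono i j * f i j).

Definition lspan (D : nat -> nat -> bool) :=
  sums (fun s => exists c a b, [/\ R c, D a b & s = c * mono a b]).
Definition rspan := sums (fun s => exists c a b, R c /\ s = mono a b * c).

Lemma mono00 : mono 0 0 = 1. Proof. by rewrite /Defs.mono !expr0 mulr1. Qed.

Lemma lexpD N f g : lexp N (fun i j => f i j + g i j) = lexp N f + lexp N g.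
Proof. by rewrite /lexp -dsumD; apply: eq_dsum => i j; rewrite mulrDl. Qed.

Lemma rexpD N f g : rexp N (fun i j => f i j + g i j) = rexp N f + rexp N g.
Proof. by rewrite /rexp -dsumD; apply: eq_dsum => i j; rewrite mulrDr. Qed.

Lemma lexp_widen N M f : supported N f -> (N <= M)%N -> lexp M f = lexp N f.
Proof. by move=> fN; apply: dsum_widen => i j /fN ->; rewrite mul0r. Qed.

Lemma rexp_widen N M f : supported N f -> (N <= M)%N -> rexp M f = rexp N f.
Proof. by move=> fN; apply: dsum_widen => i j /fN ->; rewrite mulr0. Qed.

Lemma lexp_single N a b c : (a < N)%N -> (b < N)%N -> lexp N (single a b c) = c * mono a b.
Proof.
move=> aN bN; rewrite /lexp (dsum1 aN bN) /single ?eqxx // => i j.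
by case/orP => /negPf ->; rewrite ?andbF mul0r.
Qed.

Lemma rexp_single N a b c : (a < N)%N -> (b < N)%N -> rexp N (single a b c) = mono a b * c.
Proof.
move=> aN bN; rewrite /rexp (dsum1 aN bN) /single ?eqxx // => i j.
by case/orP => /negPf ->; rewrite ?andbF mulr0.
Qed.

Lemma left_basis_generates : left_basis R x1 x2 -> forall S, subalg S ->
  (forall r, R r -> S r) -> S x1 -> S x2 -> forall s, S s.
Proof.
move=> [span _] S HS RS Sx1 Sx2 s; have [N [r [Rr ->]]] := span s.
apply: (subalg_sum HS) => i _; apply: (subalg_sum HS) => j _.
by apply: (subalgM HS (RS _ (Rr i j))); apply: (subalgM HS); apply: subalgX.
Qed.

End Expansions.

Section LeftCoordinates.
Variables (K : fieldType) (A : algType K) (R : A -> Prop) (x1 x2 : A).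
Hypotheses (HR : subalg R) (HL : left_basis R x1 x2).
Local Notation mono := (mono x1 x2).
Local Notation lexp := (lexp x1 x2).
Local Notation lspan := (lspan R x1 x2).

Lemma lexp_inj N f g : (forall i j, R (f i j)) -> (forall i j, R (g i j)) ->
  supported N f -> supported N g -> lexp N f = lexp N g -> f =2 g.
Proof.
move=> Rf Rg fN gN efg i j; apply/eqP; rewrite -subr_eq0; apply/eqP.
case: (boolP ((N <= i) || (N <= j))%N) => [Nij|]; first by rewrite fN ?gN ?subrr.
rewrite negb_or -!ltnNge => /andP [iN jN].
have e0 : lexp N (fun a b => f a b - g a b) = 0.
  rewrite -(subrr (lexp N f)) {2}efg /lexp -dsumB.
  by apply: eq_dsum => a b; rewrite mulrBl.
case: HL => _ uniq.
exact: (uniq N _ (fun a b => subalgB HR (Rf a b) (Rg a b)) e0 i j iN jN).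
Qed.

Lemma left_coords s : exists Nf : nat * (nat -> nat -> A),
  [/\ forall i j, R (Nf.2 i j), supported Nf.1 Nf.2 & s = lexp Nf.1 Nf.2].
Proof.
case: HL => /(_ s) [N [f [Rf ->]] _].
exists (N, fun i j => if (i < N)%N && (j < N)%N then f i j else 0); split => /=.
- by move=> i j; case: ifP => _; [exact: Rf | exact: subalg0].
- by move=> i j; rewrite leqNgt [(N <= j)%N]leqNgt -negb_and => /negPf ->.
- by apply: eq_bigr => i _; apply: eq_bigr => j _; rewrite !ltn_ord.
Qed.

(* Any expansion of s will do: by lcoef_lexp they all give the same coefficients. *)
Definition lcoef s := (sval (constructive_indefinite_description _ (left_coords s))).2.

Lemma lcoefP s : exists N,
  [/\ forall i j, R (lcoef s i j), supported N (lcoef s) & s = lexp N (lcoef s)].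
Proof.
by rewrite /lcoef; case: constructive_indefinite_description => -[N f] /= [? ? ?]; exists N.
Qed.

Lemma lcoef_lexp N f : (forall i j, R (f i j)) -> supported N f -> lcoef (lexp N f) =2 f.
Proof.
move=> Rf fN; have [M [Rc cM e]] := lcoefP (lexp N f).
apply: (@lexp_inj (maxn N M)) => //.
- exact: supported_widen cM (leq_maxr N M).
- exact: supported_widen fN (leq_maxl N M).
by rewrite (lexp_widen x1 x2 cM (leq_maxr N M)) (lexp_widen x1 x2 fN (leq_maxl N M)).
Qed.

Lemma lcoef0 i j : lcoef 0 i j = 0.
Proof.
have f0 : supported 0 (fun _ _ : nat => 0 : A) by [].
by have := lcoef_lexp (fun _ _ => subalg0 HR) f0 i j; rewrite /lexp /dsum big_ord0.
Qed.

Lemma lcoefD s t i j : lcoef (s + t) i j = lcoef s i j + lcoef t i j.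
Proof.
have [Ns [Rs sN es]] := lcoefP s; have [Nt [Rt tN et]] := lcoefP t.
have sM := supported_widen sN (leq_maxl Ns Nt).
have tM := supported_widen tN (leq_maxr Ns Nt).
have stM : supported (maxn Ns Nt) (fun i j => lcoef s i j + lcoef t i j).
  by move=> a b Mab; rewrite sM ?tM ?addr0.
have -> : s + t = lexp (maxn Ns Nt) (fun i j => lcoef s i j + lcoef t i j).
  rewrite lexpD (lexp_widen x1 x2 sN (leq_maxl Ns Nt)).
  by rewrite (lexp_widen x1 x2 tN (leq_maxr Ns Nt)) -es -et.
by rewrite lcoef_lexp // => a b; apply: subalgD.
Qed.

Lemma lcoef_term c a b i j : R c -> lcoef (c * mono a b) i j = single a b c i j.
Proof.
move=> Rc; have aN : (a < (maxn a b).+1)%N by rewrite ltnS leq_maxl.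
have bN : (b < (maxn a b).+1)%N by rewrite ltnS leq_maxr.
rewrite -(lexp_single x1 x2 c aN bN) lcoef_lexp //; last exact: supported_single.
by move=> a' b'; rewrite /single; case: ifP => _ //; exact: subalg0 HR.
Qed.

Lemma lcoef_dsum N F i j : lcoef (dsum N F) i j = dsum N (fun a b => lcoef (F a b) i j).
Proof.
have lcoef_sum := big_morph (fun s => lcoef s i j) (fun s t => lcoefD s t i j) (lcoef0 i j).
by rewrite /dsum lcoef_sum; apply: eq_bigr => a _; rewrite lcoef_sum.
Qed.

Lemma lcoef_lspan D s i j : lspan D s -> ~~ D i j -> lcoef s i j = 0.
Proof.
move=> + Dij; elim=> [|x s' [c [a [b [Rc Dab ->]]]] _ IH]; first exact: lcoef0.
rewrite lcoefD lcoef_term // IH addr0 /single; case: ifP => // /andP [/eqP ia /eqP jb].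
by move: Dij; rewrite ia jb Dab.
Qed.

End LeftCoordinates.

Section SkewPBW.
Variables (K : fieldType) (A : algType K) (R : A -> Prop) (GR : nat -> A -> Prop)
  (x1 x2 : A) (sigma delta : 'I_2 -> A -> A).
Hypotheses (HR : subalg R) (HG : graded_by R GR) (HL : left_basis R x1 x2)
  (Hsd : forall i r, R r -> [/\ R (sigma i r), R (delta i r) &
                 xv x1 x2 i * r = sigma i r * xv x1 x2 i + delta i r])
  (Hinj : forall i r s, R r -> R s -> sigma i r = sigma i s -> r = s)
  (Hsurj : forall i s, R s -> exists r, R r /\ sigma i r = s)
  (Hgrd : forall i m r, GR m r -> GR m (sigma i r) /\ GR m.+1 (delta i r)).
Local Notation mono := (mono x1 x2).
Local Notation lspan := (lspan R x1 x2).
Local Notation rspan := (rspan R x1 x2).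
Local Notation lcoef := (lcoef HR HL).
Local Notation s0 := (sigma ord0).
Local Notation d0 := (delta ord0).
Local Notation s1 := (sigma ord_max).
Local Notation d1 := (delta ord_max).

Lemma xv_mono (i : 'I_2) : xv x1 x2 i = mono (1 - i) i.
Proof.
by case: i => [[|[|n]] hi] //=; rewrite /xv /Defs.mono /= ?expr0 ?expr1 ?mulr1 ?mul1r.
Qed.

Lemma sigma_coef i u : R u -> sigma i u = lcoef (xv x1 x2 i * u) (1 - i) i.
Proof.
move=> Ru; have [Rs Rd ->] := Hsd i Ru.
rewrite xv_mono -[delta i u]mulr1 -(mono00 x1 x2) lcoefD !lcoef_term // /single !eqxx /=.
by case: i {Rs Rd} => [[|[|n]] hi] //=; rewrite addr0.
Qed.

Lemma sigmaD i u v : R u -> R v -> sigma i (u + v) = sigma i u + sigma i v.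
Proof. by move=> Ru Rv; rewrite !sigma_coef ?mulrDr ?lcoefD //; apply: subalgD. Qed.

Lemma sigma_eq0 i u : R u -> sigma i u = 0 -> u = 0.
Proof.
move=> Ru su0; apply: (Hinj Ru (subalg0 HR) (i := i)).
by rewrite su0 sigma_coef ?mulr0 ?lcoef0 //; apply: subalg0.
Qed.

Lemma iter_sigma_R i n r : R r -> R (iter n (sigma i) r).
Proof. by move=> Rr; elim: n => //= n IH; case: (Hsd i IH). Qed.

Lemma iter_sigma_eq0 i n u : R u -> iter n (sigma i) u = 0 -> u = 0.
Proof.
move=> Ru; elim: n => //= n IH e; apply: IH.
exact: sigma_eq0 (iter_sigma_R i n Ru) e.
Qed.

Lemma mulx1_term c a b : R c -> x1 * (c * mono a b) = s0 c * mono a.+1 b + d0 c * mono a b.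
Proof.
move=> Rc; have [_ _ e] := Hsd ord0 Rc; rewrite /xv /= in e.
by rewrite /Defs.mono exprS -(mulrA x1) mulrA e mulrDl -mulrA.
Qed.

Lemma mulx2_term c b : R c -> x2 * (c * mono 0 b) = s1 c * mono 0 b.+1 + d1 c * mono 0 b.
Proof.
move=> Rc; have [_ _ e] := Hsd ord_max Rc; rewrite /xv /= in e.
by rewrite /Defs.mono !expr0 !mul1r exprS mulrA e mulrDl -mulrA.
Qed.

Lemma lspan_mulx1 d s : lspan (fun i j => i + j < d)%N s ->
  lspan (fun i j => i + j < d.+1)%N (x1 * s).
Proof.
apply: sums_morph => [|u v|_ [c [a [b [Rc ab ->]]]]]; [exact: mulr0 | exact: mulrDr |].
have [Rs Rd _] := Hsd ord0 Rc.
rewrite mulx1_term //; apply: sumsD; apply: sums1.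
  by exists (s0 c), a.+1, b; rewrite addSn ltnS.
by exists (d0 c), a, b; rewrite ltnS ltnW.
Qed.

Lemma lspan_mulx2 n s : lspan (fun i j => (i == 0) && (j < n))%N s ->
  lspan (fun i j => (i == 0) && (j < n.+1))%N (x2 * s).
Proof.
apply: sums_morph => [|u v|_ [c [a [b [Rc /andP [/eqP -> bn] ->]]]]].
- exact: mulr0.
- exact: mulrDr.
have [Rs Rd _] := Hsd ord_max Rc.
rewrite mulx2_term //; apply: sumsD; apply: sums1.
  by exists (s1 c), 0%N, b.+1.
by exists (d1 c), 0%N, b; rewrite ltnS ltnW.
Qed.

Lemma x1X_lspan a d s : lspan (fun i j => i + j < d)%N s ->
  lspan (fun i j => i + j < a + d)%N (x1 ^+ a * s).
Proof.
move=> Ls; elim: a => [|a IH]; first by rewrite expr0 mul1r.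
by rewrite exprS -mulrA addSn; apply: lspan_mulx1.
Qed.

Lemma x2X_mul n r : R r ->
  lspan (fun i j => (i == 0) && (j < n))%N (x2 ^+ n * r - iter n s1 r * mono 0 n).
Proof.
move=> Rr; elim: n => [|n IH].
  by rewrite expr0 mul1r (mono00 x1 x2) mulr1 subrr; exact: sums0.
have Rc := iter_sigma_R ord_max n Rr; have [_ Rd _] := Hsd ord_max Rc.
have -> : x2 ^+ n.+1 * r - iter n.+1 s1 r * mono 0 n.+1 =
    x2 * (x2 ^+ n * r - iter n s1 r * mono 0 n) + d1 (iter n s1 r) * mono 0 n.
  by rewrite mulrBr mulx2_term // exprS -mulrA opprD addrA subrK.
apply: sumsD; first exact: lspan_mulx2.
by apply: sums1; exists (d1 (iter n s1 r)), 0%N, n; rewrite eqxx ltnSn.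
Qed.

Lemma x1X_mul c a b : R c ->
  lspan (fun i j => i + j < a + b)%N (x1 ^+ a * (c * mono 0 b) - iter a s0 c * mono a b).
Proof.
move=> Rc; elim: a => [|a IH]; first by rewrite expr0 mul1r subrr; exact: sums0.
have Ra := iter_sigma_R ord0 a Rc; have [_ Rd _] := Hsd ord0 Ra.
have -> : x1 ^+ a.+1 * (c * mono 0 b) - iter a.+1 s0 c * mono a.+1 b =
    x1 * (x1 ^+ a * (c * mono 0 b) - iter a s0 c * mono a b) + d0 (iter a s0 c) * mono a b.
  by rewrite mulrBr mulx1_term // exprS -mulrA opprD addrA subrK.
rewrite addSn; apply: sumsD; first exact: lspan_mulx1.
by apply: sums1; exists (d0 (iter a s0 c)), a, b; rewrite ltnSn.
Qed.

Lemma mono_mul a b r : R r ->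
  lspan (fun i j => i + j < a + b)%N (mono a b * r - iter a s0 (iter b s1 r) * mono a b).
Proof.
move=> Rr; have Rc := iter_sigma_R ord_max b Rr.
rewrite /Defs.mono -mulrA -(subrK (iter b s1 r * mono 0 b) (x2 ^+ b * r)) mulrDr -addrA.
apply: sumsD; last exact: x1X_mul.
apply: x1X_lspan; apply: sums_sub (x2X_mul b Rr).
by move=> _ [c [i [j [Rc' /andP [/eqP -> jb] ->]]]]; exists c, 0%N, j.
Qed.

Lemma lcoef_mono_mul a b r i j : R r -> (a + b <= i + j)%N ->
  lcoef (mono a b * r) i j = if (i == a) && (j == b) then iter a s0 (iter b s1 r) else 0.
Proof.
move=> Rr abij; set c := iter a s0 (iter b s1 r).
have Rc : R c by apply/iter_sigma_R/iter_sigma_R.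
rewrite -(subrK (c * mono a b) (mono a b * r)) lcoefD (lcoef_lspan HR HL (mono_mul a b Rr)).
  by rewrite add0r lcoef_term.
by rewrite -leqNgt.
Qed.

Lemma rexp_eq0 N r : (forall i j, R (r i j)) -> rexp x1 x2 N r = 0 ->
  forall i j, (i < N)%N -> (j < N)%N -> r i j = 0.
Proof.
move=> Rr rN0; pose r' i j := if (i < N)%N && (j < N)%N then r i j else 0.
suff r'0 i j : r' i j = 0 by move=> i j iN jN; have := r'0 i j; rewrite /r' iN jN.
have Rr' a b : R (r' a b) by rewrite /r'; case: ifP => _; [exact: Rr | exact: subalg0].
have r'N0 : rexp x1 x2 N r' = 0.
  by rewrite -rN0; apply: eq_bigr => a _; apply: eq_bigr => b _; rewrite /r' !ltn_ord.
(* Descending induction on the total degree a + b: the coefficient of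
   x1^a x2^b in rexp N r' is sigma_1^a sigma_2^b (r' a b) once all
   coefficients of higher degree vanish (lcoef_mono_mul). *)
suff /(_ (N + N)%N): forall d, (forall a b, (d <= a + b)%N -> r' a b = 0) -> r' i j = 0.
  by apply=> a b ab; rewrite /r'; case: ifP => // /andP [aN bN]; exfalso; lia.
elim=> [|d IH] hd; first exact: hd.
apply: IH => a b; rewrite leq_eqVlt => /orP [/eqP dab|]; last exact: hd.
case: (boolP ((a < N)%N && (b < N)%N)) => [/andP [aN bN]|out]; last first.
  by rewrite /r' (negPf out).
apply: (iter_sigma_eq0 (i := ord_max) (n := b) (Rr' a b)).
apply: (iter_sigma_eq0 (i := ord0) (n := a)); first exact: iter_sigma_R.
have lead : lcoef (mono a b * r' a b) a b = iter a s0 (iter b s1 (r' a b)).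
  by rewrite lcoef_mono_mul // !eqxx.
rewrite -lead -(lcoef0 HR HL a b) -r'N0 lcoef_dsum; symmetry.
apply: (dsum1 aN bN) => a' b' ne; case: (leqP (a' + b') (a + b)) => [le|lt].
  rewrite lcoef_mono_mul // [a == _]eq_sym [b == _]eq_sym.
  by case/orP: ne => /negPf ->; rewrite ?andbF.
by rewrite hd ?mulr0 ?lcoef0 // dab.
Qed.

Lemma rspan_term a b c : R c -> rspan (mono a b * c).
Proof. by move=> Rc; apply: sums1; exists c, a, b. Qed.

Lemma rspanB s t : rspan s -> rspan t -> rspan (s - t).
Proof.
move=> Ls Lt; apply: sumsD => //; apply: sumsN Lt => _ [c [a [b [Rc ->]]]].
by exists (- c), a, b; rewrite mulrN; split => //; apply: subalgN.
Qed.

Lemma rspan_mulR s c : R c -> rspan s -> rspan (s * c).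
Proof.
move=> Rc; apply: (sums_morph (f := fun s => s * c)) => [|u v|_ [c' [a [b [Rc' ->]]]]].
- exact: mul0r.
- exact: mulrDl.
by rewrite -mulrA; apply: rspan_term; apply: subalgM.
Qed.

Lemma rspan_x1Xmul n s : rspan s -> rspan (x1 ^+ n * s).
Proof.
apply: (sums_morph (f := fun s => x1 ^+ n * s)) => [|u v|_ [c [a [b [Rc ->]]]]].
- exact: mulr0.
- exact: mulrDr.
by rewrite /Defs.mono !mulrA -exprD; apply: rspan_term.
Qed.

Lemma rspan_mulx2 s : rspan s -> rspan (s * x2).
Proof.
apply: (sums_morph (f := fun s => s * x2)) => [|u v|_ [c [a [b [Rc ->]]]]].
- exact: mul0r.
- exact: mulrDl.
have [c' [Rc' <-]] := Hsurj ord_max Rc; have [_ Rd e] := Hsd ord_max Rc'.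
rewrite /xv /= in e; rewrite -mulrA -[_ * x2](addrK (d1 c')) -e mulrBr mulrA.
have -> : mono a b * x2 = mono a b.+1 by rewrite /Defs.mono -mulrA -exprSr.
by apply: rspanB; apply: rspan_term.
Qed.

Lemma rspan_mono_mulx1 j : rspan (x2 ^+ j * x1) ->
  forall a c, R c -> rspan (mono a j * c * x1).
Proof.
move=> Lj a c Rc; have [c' [Rc' <-]] := Hsurj ord0 Rc; have [_ Rd e] := Hsd ord0 Rc'.
rewrite /xv /= in e; rewrite -mulrA -[_ * x1](addrK (d0 c')) -e mulrBr !mulrA.
apply: rspanB; last exact: rspan_term.
by rewrite /Defs.mono -(mulrA (x1 ^+ a)); apply: rspan_mulR => //; apply: rspan_x1Xmul.
Qed.

Lemma rspan_rexp s : rspan s ->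
  exists N f, [/\ forall i j, R (f i j), supported N f & s = rexp x1 x2 N f].
Proof.
elim=> [|_ s' [c [a [b [Rc ->]]]] _ [N [f [Rf fN ->]]]].
  exists 0%N, (fun _ _ => 0); split => //; first by move=> *; exact: subalg0.
  by rewrite /rexp /dsum big_ord0.
set M := maxn N (maxn a b).+1.
have aM : (a < M)%N by rewrite leq_max ltnS leq_maxl orbT.
have bM : (b < M)%N by rewrite leq_max ltnS leq_maxr orbT.
have NM : (N <= M)%N by rewrite leq_maxl.
exists M, (fun i j => f i j + single a b c i j); split.
- by move=> i j; apply: subalgD => //; rewrite /single; case: ifP => _ //; exact: subalg0.
- by move=> i j Mij; rewrite (supported_widen fN NM) ?(supported_single c aM bM) ?addr0.
by rewrite rexpD (rexp_widen x1 x2 fN NM) (rexp_single x1 x2 c aM bM) addrC.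
Qed.

Section Relation.
Variables (k : K) (t0 t1 t2 : A).
Hypotheses (Rt0 : R t0) (Rt1 : R t1) (Rt2 : R t2)
  (Hrel : x2 * x1 = k *: (x1 * x2) + t1 * x1 + t2 * x2 + t0).

Lemma rspan_x2Xx1 j : rspan (x2 ^+ j * x1).
Proof.
have x2X n : x2 ^+ n = mono 0 n by rewrite /Defs.mono expr0 mul1r.
elim: j => [|j IH].
  have -> : x2 ^+ 0 * x1 = mono 1 0 * 1 by rewrite /Defs.mono expr0 expr1 !mulr1 mul1r.
  exact: rspan_term (subalg1 HR).
have Rk : R k%:A := subalgZ HR k (subalg1 HR).
rewrite exprSr -mulrA Hrel !mulrDr -scalerAr -mulr_algr !mulrA x2X.
apply: sumsD; first apply: sumsD; first apply: sumsD.
- by rewrite -x2X; exact: rspan_mulR Rk (rspan_mulx2 IH).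
- exact: rspan_mono_mulx1 IH 0 t1 Rt1.
- exact: rspan_mulx2 (rspan_term 0 j Rt2).
- exact: rspan_term.
Qed.

Lemma rspan_mulx1 s : rspan s -> rspan (s * x1).
Proof.
apply: (sums_morph (f := fun s => s * x1)) => [|u v|_ [c [a [b [Rc ->]]]]].
- exact: mul0r.
- exact: mulrDl.
exact: rspan_mono_mulx1 (rspan_x2Xx1 b) a c Rc.
Qed.

Lemma rspan_all s : rspan s.
Proof.
case: HL => /(_ s) [N [r [Rr ->]] _].
have mulX x n u : (forall v, rspan v -> rspan (v * x)) -> rspan u -> rspan (u * x ^+ n).
  by move=> Lx Lu; elim: n => [|n IH]; rewrite ?expr0 ?mulr1 // exprSr mulrA; apply: Lx.
apply: sums_big => i _; apply: sums_big => j _.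
rewrite /Defs.mono mulrA; apply: (mulX _ _ _ rspan_mulx2); apply: (mulX _ _ _ rspan_mulx1).
by rewrite -[r i j]mul1r -(mono00 x1 x2); apply: rspan_term.
Qed.

Lemma right_basis_skew : right_basis R x1 x2.
Proof.
split; last exact: rexp_eq0.
by move=> s; have [N [f [Rf _ ->]]] := rspan_rexp (rspan_all s); exists N, f.
Qed.

End Relation.

Lemma sigma_reflects_grading i m u : R u -> GR m (sigma i u) -> GR m u.
Proof.
apply: (graded_reflect HR HG (sigmaD i) (@sigma_eq0 i)) => m' u' Gu.
exact: proj1 (Hgrd i Gu).
Qed.

Lemma xR_sub_Rx r s : R r -> R s -> exists a b c,
  [/\ R a, R b, R c & x1 * r + x2 * s = a * x1 + b * x2 + c].
Proof.
move=> Rr Rs; have [Rsr Rdr er] := Hsd ord0 Rr; have [Rss Rds es] := Hsd ord_max Rs.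
exists (s0 r), (s1 s), (d0 r + d1 s); split => //; first exact: subalgD.
by rewrite /xv /= in er es; rewrite er es addrACA.
Qed.

Lemma xR_sub_Rx_graded i m r : GR m r -> exists a b c,
  [/\ GR m a, GR m b, GR m.+1 c & xv x1 x2 i * r = a * x1 + b * x2 + c].
Proof.
move=> Gr; have [Gs Gd] := Hgrd i Gr; have [_ _ ->] := Hsd i (graded_sub HG Gr).
have G0 := graded0 HG m; case: i Gs Gd => [[|[|n]] hi] //= Gs Gd.
  by exists (sigma (Ordinal hi) r), 0, (delta (Ordinal hi) r); rewrite mul0r addr0.
by exists 0, (sigma (Ordinal hi) r), (delta (Ordinal hi) r); rewrite mul0r add0r.
Qed.

Lemma left_relation k t0 t1 t2 : k != 0 -> GR 2 t0 -> GR 1 t1 -> GR 1 t2 ->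
  x2 * x1 = k *: (x1 * x2) + t1 * x1 + t2 * x2 + t0 ->
  exists (p12 p11 : K) t0' t1' t2', [/\ GR 2 t0', GR 1 t1', GR 1 t2' &
    x1 * x2 = p12 *: (x2 * x1) + p11 *: (x1 ^+ 2) + x1 * t1' + x2 * t2' + t0'].
Proof.
move=> k0 Gt0 Gt1 Gt2 Hrel.
have [u [Ru su]] := Hsurj ord0 (graded_sub HG Gt1).
have [v [Rv sv]] := Hsurj ord_max (graded_sub HG Gt2).
have Gu : GR 1 u by apply: (@sigma_reflects_grading ord0); rewrite ?su.
have Gv : GR 1 v by apply: (@sigma_reflects_grading ord_max); rewrite ?sv.
have [_ _ eu] := Hsd ord0 Ru; have [_ _ ev] := Hsd ord_max Rv.
rewrite /xv /= su sv in eu ev.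
set w := t0 - d0 u - d1 v.
have Gw : GR 2 w.
  apply: (gradedB HG); first apply: (gradedB HG) => //.
  - exact: proj2 (Hgrd ord0 Gu).
  - exact: proj2 (Hgrd ord_max Gv).
have e : x2 * x1 - (x1 * u + (x2 * v + w)) = k *: (x1 * x2).
  rewrite Hrel eu ev /w !opprD !opprK !addrA.
  by rewrite (ACl (1*(2*5)*(3*7)*(4*9)*(6*10)*(8*11)))%AC /= !subrr !addNr !addr0.
exists k^-1, 0, (- k^-1 *: w), (- k^-1 *: u), (- k^-1 *: v).
split; try exact: (gradedZ HG).
rewrite scale0r addr0 !scaleNr !mulrN -!scalerAr -!addrA -!opprD -!scalerDr -scalerBr e.
by rewrite scalerA mulVf ?scale1r.
Qed.

End SkewPBW.

Section ConnectedGrading.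
Variables (K : fieldType) (A : algType K) (R : A -> Prop) (GR : nat -> A -> Prop)
  (x1 x2 : A).
Hypotheses (HG : graded_by R GR)
  (Hconn : forall a, pbw_piece GR x1 x2 0 a <-> exists k : K, a = k%:A).
Local Notation mono := (mono x1 x2).
Local Notation piece := (pbw_piece GR x1 x2).

Lemma pbw_piece_term m a b r :
  (a + b <= m)%N -> GR (m - (a + b)) r -> piece m (r * mono a b).
Proof.
move=> abm Gr; exists (single a b r); split.
  move=> i j _; rewrite /single; case: ifP => [/andP [/eqP -> /eqP ->] //|_].
  exact: graded0 HG _.
have aN : (a < m.+1)%N by lia.
have bN : (b < m.+1)%N by lia.
rewrite -(lexp_single x1 x2 r aN bN); apply: eq_bigr => i _.
rewrite [RHS]big_mkcond; apply: eq_bigr => j _.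
rewrite /single; case: ifP => [/andP [/eqP -> /eqP ->]|_]; first by rewrite abm.
by rewrite mul0r; case: ifP.
Qed.

Lemma graded_one : GR 0 1.
Proof.
have [r [Gr e]] : piece 0 1 by apply/Hconn; exists 1; rewrite scale1r.
rewrite big_ord1 big_mkcond big_ord1 /= (mono00 x1 x2) mulr1 in e.
by rewrite e; exact: Gr 0%N 0%N isT.
Qed.

Lemma graded_deg0_scalar c : GR 0 c -> exists k : K, c = k%:A.
Proof.
by move=> Gc; apply/Hconn; rewrite -[c]mulr1 -(mono00 x1 x2); apply: pbw_piece_term.
Qed.

Lemma pbw_piece_generators :
  [/\ piece 1 x1, piece 1 x2 & forall m r, GR m r -> piece m r].
Proof.
split.
- have := pbw_piece_term (a := 1) (b := 0) (leqnn 1) graded_one.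
  by rewrite /Defs.mono expr1 expr0 !mulr1 mul1r.
- have := pbw_piece_term (a := 0) (b := 1) (leqnn 1) graded_one.
  by rewrite /Defs.mono expr1 expr0 !mul1r.
- move=> m r Gr; rewrite -[r]mulr1 -(mono00 x1 x2).
  by apply: pbw_piece_term; rewrite ?subn0.
Qed.

Lemma graded_relation c : GR 0 c -> c <> 0 ->
  in_R2R1x GR x1 x2 (x2 * x1 - c * x1 * x2) -> exists k t0 t1 t2,
  [/\ k != 0, GR 2 t0, GR 1 t1, GR 1 t2 &
       x2 * x1 = k *: (x1 * x2) + t1 * x1 + t2 * x2 + t0].
Proof.
move=> Gc c0 [t0 [t1 [t2 [Gt0 Gt1 Gt2 e]]]]; have [k ck] := graded_deg0_scalar Gc.
exists k, t0, t1, t2; split => //.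
  by apply/eqP => k0; apply: c0; rewrite ck k0 scale0r.
move/eqP: e; rewrite subr_eq => /eqP ->; rewrite ck -mulrA mulr_algl.
by rewrite (ACl (4*2*3*1))%AC.
Qed.

End ConnectedGrading.

Theorem theorem3p2 (K : fieldType) (A : algType K) (R : A -> Prop)
    (GR : nat -> A -> Prop) (x1 x2 : A) :
  connected_graded_skew_PBW2 R GR x1 x2 -> connected_graded_double_Ore R GR x1 x2.
Proof.
move=> [[HR HG] HL [_ Hiv] [sigma [delta [Hsd Hinj Hsurj Hgrd]]] [HGA Hconn]].
have [c [Gc c0 _ Hc]] := Hiv ord0 ord_max.
have [k [t0 [t1 [t2 [k0 Gt0 Gt1 Gt2 Hrel]]]]] := graded_relation HG Hconn Gc c0 Hc.
have [Gx1 Gx2 GRA] := pbw_piece_generators HG Hconn.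
have Hx := xR_sub_Rx HR Hsd.
have Hright := right_basis_skew HR HL Hsd Hinj Hsurj
  (graded_sub HG Gt0) (graded_sub HG Gt1) (graded_sub HG Gt2) Hrel.
split => //.
- exact: left_basis_generates HL.
- by split => //; exists k, 0, t0, t1, t2; rewrite scale0r addr0.
- by split => //; apply: (left_relation HR HG HL Hsd Hinj Hsurj Hgrd k0 Gt0 Gt1 Gt2 Hrel).
- exact: xR_sub_Rx_graded HG Hsd Hgrd.
Qed.
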